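(* With the notation of the context, $$\sum_{\lambda\in\mathcal{D}}(-1)^{n_\lambda}(m_\lambda+n_\lambda)q^{N_\lambda} =\sum_{r=1}^\infty(-1)^r\Big[(3r-1)q^{r(3r-1)/2}+3r\,q^{r(3r+1)/2}\Big]$$ as formal power series in $q$.
   Context: $\mathcal{D}$ denotes the set of all partitions into distinct parts (of all nonnegative integers, including the empty partition of $0$). For $\lambda\in\mathcal{D}$, $N_\lambda$ is the integer partitioned by $\lambda$, $n_\lambda$ is the number of parts of $\lambda$, and $m_\lambda$ is the largest part of $\lambda$ (with $m_\lambda=0$ for the empty partition). *)

From mathcomp Require Import all_boot all_order all_algebra.
Set Implicit Arguments. Unset Strict Implicit. Unset Printing Implicit Defensive.
Import Order.TTheory GRing.Theory Num.Theory.
Local Open Scope ring_scope.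

(* A formal power series in q with integer coefficients is represented by its
   coefficient sequence nat -> int; equality of series is equality of
   coefficient functions. *)

(* A partition of N into distinct parts is identified with its set of parts,
   a subset of {1,...,N}; we encode it as a set A of 'I_N.+1 not containing 0
   whose elements sum to N. *)
Definition is_dpart (N : nat) (A : {set 'I_N.+1}) : bool :=
  (ord0 \notin A) && (\sum_(i in A) (i : nat) == N)%N.

Definition npart (N : nat) (A : {set 'I_N.+1}) : nat := #|A|.
(* largest part m_lambda (0 for the empty partition) *)
Definition mpart (N : nat) (A : {set 'I_N.+1}) : nat := (\max_(i in A) (i : nat))%N.

Definition lhs_series (N : nat) : int :=
  \sum_(A : {set 'I_N.+1} | is_dpart A)
     (-1) ^+ npart A * (mpart A + npart A)%:Z.

(* coefficient of q^N in
   sum_{r>=1} (-1)^r [ (3r-1) q^{r(3r-1)/2} + 3r q^{r(3r+1)/2} ];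
   only r <= N can contribute since r(3r-1)/2 >= r. *)
Definition rhs_series (N : nat) : int :=
  \sum_(1 <= r < N.+2)
     (-1) ^+ r * ( (3 * r - 1)%:Z * (((r * (3 * r - 1)) %/ 2)%N == N)%:Z
                 + (3 * r)%:Z * (((r * (3 * r + 1)) %/ 2)%N == N)%:Z ).

From mathcomp Require Import all_boot all_order all_algebra zify.
From Stdlib Require Import FunctionalExtensionality.
Set Implicit Arguments. Unset Strict Implicit. Unset Printing Implicit Defensive.
Import GRing.Theory Num.Theory.

(* Franklin's involution.  List the parts of a partition into distinct parts in
   decreasing order; its slope is the length of the initial run of consecutive
   integers, its base the smallest part.  If base <= slope, remove the base and add
   one to each of the base largest parts; otherwise subtract one from each of the
   slope largest parts and append the slope as a new smallest part.  Away from the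
   pentagonal staircases [2r-1, ..., r] and [2r, ..., r+1] this is an involution
   that preserves N and changes n and m by one in opposite directions, so it keeps
   m + n and reverses the sign (-1)^n: all those terms cancel.  The two staircases
   have N = r(3r-1)/2, m + n = 3r - 1 and N = r(3r+1)/2, m + n = 3r. *)

Definition stair (m k : nat) : seq nat := [seq m - i | i <- iota 0 k].

Lemma stairS m k : stair m k.+1 = m :: stair m.-1 k.
Proof.
rewrite /stair /= subn0 -(addn0 1) iotaDl -map_comp; congr (_ :: _).
by apply: eq_map => i /=; lia.
Qed.

Lemma size_stair m k : size (stair m k) = k.
Proof. by rewrite size_map size_iota. Qed.

Lemma stairD m a b : stair m (a + b) = stair m a ++ stair (m - a) b.
Proof.
rewrite /stair iotaD map_cat add0n; congr (_ ++ _).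
by rewrite -{1}(addn0 a) iotaDl -map_comp; apply: eq_map => i /=; lia.
Qed.

Lemma stair_rcons m k : stair m k.+1 = rcons (stair m k) (m - k).
Proof. by rewrite -addn1 stairD cats1 /stair /= subn0. Qed.

Lemma last_stair m k : last 0 (stair m k.+1) = m - k.
Proof. by rewrite stair_rcons last_rcons. Qed.

Lemma map_succ_stair m k : k <= m.+1 -> map succn (stair m k) = stair m.+1 k.
Proof.
move=> le_km; rewrite /stair -map_comp; apply/eq_in_map => i.
by rewrite mem_iota /= => lt_ik; lia.
Qed.

Lemma map_pred_stair m k : map predn (stair m k) = stair m.-1 k.
Proof. by rewrite /stair -map_comp; apply: eq_map => i /=; lia. Qed.

Lemma sumn_map_succ s : sumn (map succn s) = sumn s + size s.
Proof. by elim: s => //= x s ->; lia. Qed.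

Lemma stair_gt0 m k : k <= m -> all (leq 1) (stair m k).
Proof.
elim: k m => [|k IHk] m le_km //.
by rewrite stairS /= IHk; [rewrite andbT; lia | lia].
Qed.

Lemma sumn_stair m k : k <= m -> 2 * sumn (stair m k) = k * (2 * m + 1 - k).
Proof.
elim: k => [|k IHk] le_km //.
rewrite stair_rcons sumn_rcons mulnDr IHk; last lia.
have -> : m = k + (m - k.+1).+1 by lia.
nia.
Qed.

Lemma sumn_stair_pentagonal1 r : sumn (stair (2 * r - 1) r) = (r * (3 * r - 1)) %/ 2.
Proof.
case: r => [|r] //; have := @sumn_stair (2 * r.+1 - 1) r.+1 ltac:(lia).
have -> : 2 * (2 * r.+1 - 1) + 1 - r.+1 = 3 * r.+1 - 1 by lia.
by move <-; rewrite mulKn.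
Qed.

Lemma sumn_stair_pentagonal2 r : sumn (stair (2 * r) r) = (r * (3 * r + 1)) %/ 2.
Proof.
have := @sumn_stair (2 * r) r ltac:(lia).
have -> : 2 * (2 * r) + 1 - r = 3 * r + 1 by lia.
by move <-; rewrite mulKn.
Qed.

Lemma sorted_stair_cat m k t : k <= m ->
  sorted gtn (stair m k.+1 ++ t) = path gtn (m - k) t.
Proof.
elim: k m => [|k IHk] m le_km; first by rewrite stairS /= subn0.
rewrite !stairS /=.
have -> : path gtn m.-1 (stair m.-2 k ++ t) = sorted gtn (stair m.-1 k.+1 ++ t).
  by rewrite stairS.
rewrite IHk; last lia.
have -> : m.-1 - k = m - k.+1 by lia.
by have -> : m.-1 < m by lia.
Qed.

Fixpoint slope (l : seq nat) : nat :=
  if l is x :: t then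
    if t is y :: _ then (if x == y.+1 then (slope t).+1 else 1) else 1
  else 0.

Lemma slope_cons2 x y t :
  slope [:: x, y & t] = if x == y.+1 then (slope (y :: t)).+1 else 1.
Proof. by []. Qed.

Lemma slope_stairS_cat m k t : 0 < m ->
  slope (stair m k.+2 ++ t) = (slope (stair m.-1 k.+1 ++ t)).+1.
Proof.
move=> m_gt0; rewrite [stair m _]stairS cat_cons [stair m.-1 _]stairS cat_cons.
by rewrite slope_cons2 prednK // eqxx -cat_cons -stairS.
Qed.

Lemma slope_stair_cat m k t : k <= m -> (t = [::] \/ (head 0 t).+1 < m - k) ->
  slope (stair m k.+1 ++ t) = k.+1.
Proof.
elim: k m => [|k IHk] m le_km t_gap.
  rewrite stairS; case: t t_gap => [|y t] //= [] // lt_ym.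
  by have -> : (m == y.+1) = false by apply/eqP; lia.
rewrite slope_stairS_cat ?IHk //; try lia.
by case: t_gap => [->|?]; [left | right; lia].
Qed.

Lemma slope_stair m k : k <= m -> slope (stair m k.+1) = k.+1.
Proof. by move=> le_km; rewrite -[stair _ _]cats0 slope_stair_cat //; left. Qed.

Lemma slope_stair_cat_ge m k t : k <= m -> k.+1 <= slope (stair m k.+1 ++ t).
Proof.
elim: k m => [|k IHk] m le_km.
  by rewrite stairS; case: t => //= y t; case: ifP.
by rewrite slope_stairS_cat ?ltnS ?IHk //; lia.
Qed.

Lemma slope_decomposition x t : sorted gtn (x :: t) ->
  exists k d, [/\ x :: t = stair x k.+1 ++ d, slope (x :: t) = k.+1, k <= x &
                  d = [::] \/ (head 0 d).+1 < x - k].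
Proof.
elim: t x => [|y t IHt] x sorted_xt.
  by exists 0, [::]; rewrite stairS; split=> //; left.
have /andP[lt_yx sorted_yt] : (y < x) && sorted gtn (y :: t) := sorted_xt.
have [exy | nxy] := eqVneq x y.+1.
  have [k [d [eq_yt slope_yt le_ky d_gap]]] := IHt y sorted_yt.
  by exists k.+1, d; rewrite slope_cons2 exy eqxx slope_yt stairS eq_yt.
exists 0, (y :: t); rewrite slope_cons2 (negbTE nxy) stairS; split=> //.
by right => /=; lia.
Qed.

Definition is_dseq (l : seq nat) : bool := sorted gtn l && all (leq 1) l.

(* For n = 0 this is [::]: the empty partition is left out of Franklin's
   involution, and its weight is 0. *)
Definition pentagonal (l : seq nat) : bool :=
  let n := size l in (l == stair (2 * n - 1) n) || (l == stair (2 * n) n).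

Definition base_to_slope (l : seq nat) : seq nat :=
  let s := last 0 l in let b := take (size l).-1 l in
  [seq x.+1 | x <- take s b] ++ drop s b.

Definition slope_to_base (l : seq nat) : seq nat :=
  let k := slope l in rcons ([seq x.-1 | x <- take k l] ++ drop k l) k.

Definition franklin (l : seq nat) : seq nat :=
  if last 0 l <= slope l then base_to_slope l else slope_to_base l.

Definition weight (l : seq nat) : int := ((-1) ^+ size l * (head 0 l + size l)%:Z)%R.

Definition franklin_correct (l : seq nat) : Prop :=
  [/\ franklin (franklin l) = l, is_dseq (franklin l), ~~ pentagonal (franklin l),
      sumn (franklin l) = sumn l & weight (franklin l) = (- weight l)%R].

Lemma base_to_slope_stair m s c : s <= m.+1 ->
  base_to_slope (rcons (stair m s ++ c) s) = stair m.+1 s ++ c.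
Proof.
move=> le_sm; rewrite /base_to_slope last_rcons size_rcons -cats1 take_size_cat //.
by rewrite take_size_cat ?drop_size_cat ?size_stair // map_succ_stair.
Qed.

Lemma slope_to_base_stair m k t : slope (stair m k ++ t) = k ->
  slope_to_base (stair m k ++ t) = rcons (stair m.-1 k ++ t) k.
Proof.
move=> slope_k; rewrite /slope_to_base slope_k.
by rewrite take_size_cat ?drop_size_cat ?size_stair // map_pred_stair.
Qed.

Lemma is_dseq_stair m k : k <= m -> is_dseq (stair m k).
Proof.
case: k => [|k] le_km //.
by rewrite /is_dseq -[stair _ _]cats0 sorted_stair_cat ?cats0 ?stair_gt0 //; lia.
Qed.

Lemma pentagonal_slope_last l : pentagonal l -> l != [::] ->
  slope l = size l /\ (last 0 l = size l \/ last 0 l = (size l).+1).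
Proof.
rewrite /pentagonal => + l_ne0.
case n_def: (size l) => [|n]; first by move: l_ne0; rewrite -size_eq0 n_def.
by case/orP=> /eqP ->; rewrite slope_stair ?last_stair; try split; lia.
Qed.

Lemma path_gtn_leq a b c : path gtn a c -> a <= b -> path gtn b c.
Proof. by case: c => //= z c /andP[lt_za ->] le_ab; rewrite andbT; lia. Qed.

Lemma weight_shift l r : size l = (size r).+1 -> head 0 r = (head 0 l).+1 ->
  weight r = (- weight l)%R.
Proof.
move=> size_lr head_rl; rewrite /weight size_lr head_rl exprS mulN1r mulNr opprK.
by rewrite addSnnS.
Qed.

Lemma franklin_base_move m j c : j <= m ->
  let l := rcons (stair m j.+1 ++ c) j.+1 in
  is_dseq l -> franklin l = stair m.+1 j.+1 ++ c /\ franklin_correct l.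
Proof.
move=> le_jm l /andP[sorted_l pos_l]; set r := stair m.+1 j.+1 ++ c.
have l_cat : l = stair m j.+1 ++ rcons c j.+1 by rewrite /l rcons_cat.
have /andP[path_c lt_jc] : path gtn (m - j) c && (j.+1 < last (m - j) c).
  by rewrite -rcons_path -sorted_stair_cat // -l_cat.
have pos_c : all (leq 1) c by move: pos_l; rewrite l_cat all_cat all_rcons => /and3P[].
have dseq_r : is_dseq r.
  rewrite /is_dseq /r sorted_stair_cat ?all_cat ?stair_gt0 ?pos_c; try lia.
  by rewrite !andbT; apply: (path_gtn_leq path_c); lia.
have slope_r : slope r = j.+1.
  rewrite /r slope_stair_cat; [done | lia |].
  by case: (c) path_c => [|z c'] /=; [left | move=> /andP[? _]; right; lia].
have last_r : j.+1 < last 0 r.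
  rewrite /r last_cat last_stair.
  by move: lt_jc; case/lastP: (c) => [|c' z] /=; [lia | rewrite !last_rcons].
have npent_r : ~~ pentagonal r.
  apply/negP => pent_r.
  have [] := pentagonal_slope_last pent_r; first by rewrite /r stairS.
  rewrite slope_r /r size_cat size_stair => size_c.
  have c0 : c = [::] by apply/nilP; rewrite /nilp; lia.
  by move: lt_jc last_r; rewrite /r c0 cats0 last_stair /=; lia.
have franklin_l : franklin l = r.
  rewrite /franklin.
  have -> : last 0 l <= slope l by rewrite {1}/l last_rcons l_cat slope_stair_cat_ge.
  by rewrite /l base_to_slope_stair //; lia.
have franklin_r : franklin r = l.
  by rewrite /franklin slope_r leqNgt last_r /= slope_to_base_stair.
split=> //; rewrite /franklin_correct franklin_l; split=> //.
  rewrite /r /l sumn_rcons !sumn_cat -map_succ_stair ?sumn_map_succ ?size_stair; lia.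
by apply: weight_shift; rewrite /l /r ?size_rcons ?size_cat ?size_stair ?stairS.
Qed.

Lemma franklin_slope_move m k d : k <= m -> (d = [::] \/ (head 0 d).+1 < m - k) ->
  let l := stair m k.+1 ++ d in
  is_dseq l -> ~~ pentagonal l -> k.+1 < last 0 l -> franklin_correct l.
Proof.
move=> le_km d_gap l /andP[sorted_l pos_l] npent_l last_l.
set r := rcons (stair m.-1 k.+1 ++ d) k.+1.
have slope_l : slope l = k.+1 by apply: slope_stair_cat.
have path_d : path gtn (m - k) d by rewrite -sorted_stair_cat.
have pos_d : all (leq 1) d by move: pos_l; rewrite all_cat => /andP[].
have long_stair : d = [::] -> k.+3 <= m - k.
  move=> d0; move: last_l npent_l; rewrite /l d0 cats0 last_stair => lt_k_mk.
  have [mk2|] := eqVneq (m - k) k.+2; last lia.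
  have -> : m = 2 * k.+1 by lia.
  by rewrite /pentagonal size_stair eqxx orbT.
have lt_km : k.+2 <= m.
  case: d_gap => [/long_stair|]; first lia.
  by case: (d) pos_d => [|z d'] /= => [|/andP[? _]]; lia.
have lt_k_lastd : k.+1 < last (m.-1 - k) d.
  move: last_l; rewrite /l last_cat last_stair.
  by case/lastP: (d) long_stair => [/(_ erefl)|d' z _]; rewrite ?last_rcons //=; lia.
have dseq_r : is_dseq r.
  rewrite /is_dseq /r rcons_cat sorted_stair_cat; last lia.
  rewrite rcons_path all_cat all_rcons stair_gt0 ?pos_d ?andbT; last lia.
  apply/andP; split; last exact: lt_k_lastd.
  by case: (d) d_gap path_d => [|z d'] //= [] // lt_z /andP[_ ->]; rewrite andbT; lia.
have npent_r : ~~ pentagonal r.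
  apply/negP => /pentagonal_slope_last [|_]; first by rewrite /r -size_eq0 size_rcons.
  by rewrite /r last_rcons size_rcons size_cat size_stair; lia.
have franklin_l : franklin l = r.
  by rewrite /franklin slope_l leqNgt last_l /= slope_to_base_stair.
have le_k_m1 : k <= m.-1 by lia.
have [franklin_r [_ _ _ sumn_r weight_r]] := franklin_base_move le_k_m1 dseq_r.
rewrite -/r prednK ?(ltn_trans _ lt_km) // -/l in franklin_r.
rewrite franklin_r in sumn_r weight_r.
by split; rewrite franklin_l // weight_r opprK.
Qed.

Lemma base_decomposition l : is_dseq l -> ~~ pentagonal l -> last 0 l <= slope l ->
  exists m j c, j <= m /\ l = rcons (stair m j.+1 ++ c) j.+1.
Proof.
case: l => [|x t] // dseq_l npent_l; have /andP[sorted_l pos_l] := dseq_l.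
have [k [d [l_def slope_l le_kx d_gap]]] := slope_decomposition sorted_l.
have size_l : size (x :: t) = k.+1 + size d by rewrite l_def size_cat size_stair.
set s := last 0 (x :: t); rewrite slope_l => le_sk.
have s_gt0 : 0 < s by move/allP: pos_l; apply; apply: mem_last.
have lt_s_size : s < size (x :: t).
  rewrite ltnNge; apply: contra npent_l => ge_s_size.
  have d0 : d = [::] by apply/nilP; rewrite /nilp; lia.
  have s_def : s = x - k by rewrite /s l_def d0 cats0 last_stair.
  have -> : x :: t = stair (2 * k.+1 - 1) k.+1.
    by rewrite l_def d0 cats0; congr stair; lia.
  by rewrite /pentagonal size_stair eqxx.
have l_split : x :: t = stair x s ++ (stair (x - s) (k.+1 - s) ++ d).
  by rewrite {1}l_def catA -stairD subnKC.
have : stair (x - s) (k.+1 - s) ++ d != [::].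
  by apply: contraTneq lt_s_size => tail0; rewrite l_split tail0 cats0 size_stair ltnn.
case/lastP: (stair _ _ ++ d) l_split => [//|c z] l_split _.
have z_s : z = s by rewrite /s l_split last_cat last_rcons.
exists x, s.-1, c; split; first lia.
by rewrite prednK // l_split z_s rcons_cat.
Qed.

Lemma franklin_involution l : is_dseq l -> ~~ pentagonal l -> franklin_correct l.
Proof.
move=> dseq_l npent_l.
have [base_le | slope_lt] := leqP (last 0 l) (slope l).
  have [m [j [c [le_jm l_def]]]] := base_decomposition dseq_l npent_l base_le.
  by subst l; have [] := franklin_base_move le_jm dseq_l.
case: l dseq_l npent_l slope_lt => [//|x t] dseq_l npent_l.
have [k [d [l_def slope_l le_kx d_gap]]] := slope_decomposition (proj1 (andP dseq_l)).
rewrite slope_l l_def in dseq_l npent_l * => slope_lt.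
exact: franklin_slope_move.
Qed.

Lemma mem_le_sumn l x : x \in l -> x <= sumn l.
Proof. by elim: l => //= y l IHl; rewrite inE => /orP[/eqP ->|/IHl]; lia. Qed.

Lemma size_le_sumn l : all (leq 1) l -> size l <= sumn l.
Proof. by elim: l => //= y l IHl /andP[? /IHl]; lia. Qed.

Lemma head_sorted_gtn l : sorted gtn l -> head 0 l = (\max_(x <- l) x)%N.
Proof.
elim: l => [|x l IHl] sorted_xl; first by rewrite big_nil.
rewrite big_cons -IHl ?(path_sorted sorted_xl) //; apply/esym/maxn_idPl.
by case: l sorted_xl {IHl} => //= y l /andP[/ltnW].
Qed.

Section PartitionsAsSets.

Variable N : nat.
Implicit Types (A : {set 'I_N.+1}) (l : seq nat).

Definition parts A : seq nat := sort geq [seq val i | i <- enum A].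

Definition set_of_parts l : {set 'I_N.+1} := [set i | val i \in l].

Lemma sorted_parts A : sorted gtn (parts A).
Proof.
rewrite gtn_sorted_uniq_geq sort_uniq (map_inj_uniq val_inj) enum_uniq.
exact: (sort_sorted (fun x y => leq_total y x)).
Qed.

Lemma mem_parts A (i : 'I_N.+1) : (val i \in parts A) = (i \in A).
Proof. by rewrite mem_sort (mem_map val_inj) mem_enum. Qed.

Lemma parts_ltn A x : x \in parts A -> x < N.+1.
Proof. by rewrite /parts mem_sort => /mapP[i _ ->]; apply: ltn_ord. Qed.

Lemma partsK : cancel parts set_of_parts.
Proof. by move=> A; apply/setP => i; rewrite inE mem_parts. Qed.

Lemma set_of_partsK l : sorted gtn l -> all (leq^~ N) l -> parts (set_of_parts l) = l.
Proof.
move=> sorted_l /allP le_lN; apply: (irr_sorted_eq (leT := gtn)) => //.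
- by move=> a b c /= lt_ba lt_cb; apply: ltn_trans lt_cb lt_ba.
- by move=> a /=; rewrite ltnn.
- exact: sorted_parts.
move=> x; apply/idP/idP => [x_parts | x_l].
  have x_lt := parts_ltn x_parts.
  by move: x_parts; rewrite -[x]/(val (Ordinal x_lt)) mem_parts inE.
by rewrite -[x]/(val (Ordinal (le_lN x x_l : x < N.+1))) mem_parts inE.
Qed.

Lemma perm_parts A : perm_eq (parts A) [seq val i | i <- enum A].
Proof. by rewrite /parts perm_sort. Qed.

Lemma sumn_parts A : sumn (parts A) = (\sum_(i in A) i)%N.
Proof. by rewrite sumnE (perm_big _ (perm_parts A)) big_map big_enum. Qed.

Lemma size_parts A : size (parts A) = #|A|.
Proof. by rewrite size_sort size_map cardE. Qed.

Lemma head_parts A : head 0 (parts A) = (\max_(i in A) i)%N.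
Proof.
by rewrite head_sorted_gtn ?sorted_parts // (perm_big _ (perm_parts A)) big_map big_enum.
Qed.

Lemma is_dpartE A : is_dpart A = is_dseq (parts A) && (sumn (parts A) == N).
Proof.
rewrite /is_dpart /is_dseq sorted_parts sumn_parts; congr (_ && _).
rewrite -mem_parts /=.
by elim: (parts A) => //= x l <-; rewrite inE negb_or; case: x.
Qed.

End PartitionsAsSets.

Local Open Scope ring_scope.

Lemma sum_sign_reversing_involution (R : numDomainType) (T : finType) (P : pred T)
    (f : T -> T) (w : T -> R) :
  involutive f -> (forall x, P x -> P (f x)) -> (forall x, P x -> w (f x) = - w x) ->
  \sum_(x | P x) w x = 0.
Proof.
move=> fK Pf wf; apply/eqP; rewrite -eqNr -sumrN.
rewrite [X in _ == X](reindex_inj (inv_inj fK)) /=; apply/eqP.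
by apply: eq_big => [x | x /wf -> //]; apply/idP/idP => /Pf; rewrite ?fK.
Qed.

Section FranklinOnSets.

Variable N : nat.
Implicit Types (A : {set 'I_N.+1}) (l : seq nat).

Lemma weight_parts A : (-1) ^+ npart A * (mpart A + npart A)%:Z = weight (parts A).
Proof. by rewrite /weight /npart /mpart size_parts head_parts. Qed.

Definition franklin_set A : {set 'I_N.+1} :=
  if is_dpart A && ~~ pentagonal (parts A) then set_of_parts N (franklin (parts A))
  else A.

Lemma franklin_set_correct A : is_dpart A -> ~~ pentagonal (parts A) ->
  [/\ parts (franklin_set A) = franklin (parts A), is_dpart (franklin_set A)
    & ~~ pentagonal (parts (franklin_set A))].
Proof.
move=> dpart_A npent_A; have := dpart_A; rewrite is_dpartE => /andP[dseq_A /eqP sumn_A].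
have [_ dseq_F npent_F sumn_F _] := franklin_involution dseq_A npent_A.
have parts_F : parts (franklin_set A) = franklin (parts A).
  rewrite /franklin_set dpart_A npent_A set_of_partsK //; first by case/andP: dseq_F.
  by apply/allP => x /mem_le_sumn; rewrite sumn_F sumn_A.
by rewrite is_dpartE parts_F dseq_F sumn_F sumn_A eqxx.
Qed.

Lemma franklin_setK : involutive franklin_set.
Proof.
move=> A; have [|ndA] := boolP (is_dpart A && ~~ pentagonal (parts A)); last first.
  by rewrite /franklin_set (negbTE ndA) (negbTE ndA).
case/andP=> dpart_A npent_A.
have [parts_F dpart_F npent_F] := franklin_set_correct dpart_A npent_A.
have := dpart_A; rewrite is_dpartE => /andP[dseq_A _].
have [FF _ _ _ _] := franklin_involution dseq_A npent_A.
by rewrite {1}/franklin_set dpart_F npent_F parts_F FF partsK.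
Qed.

Lemma sum_weight_nonpentagonal :
  \sum_(A : {set 'I_N.+1} | is_dpart A && ~~ pentagonal (parts A)) weight (parts A) = 0.
Proof.
apply: (sum_sign_reversing_involution franklin_setK) => A /andP[dpart_A npent_A];
  have [parts_F dpart_F npent_F] := franklin_set_correct dpart_A npent_A.
  by rewrite dpart_F npent_F.
have := dpart_A; rewrite is_dpartE => /andP[dseq_A _].
by have [_ _ _ _ weight_F] := franklin_involution dseq_A npent_A; rewrite parts_F.
Qed.

Lemma sum_parts_eq l : is_dseq l ->
  \sum_(A : {set 'I_N.+1} | is_dpart A) ((parts A == l) : nat)%:Z
  = ((sumn l == N) : nat)%:Z.
Proof.
case/andP=> sorted_l pos_l; have [sumn_l | sumn_l] := eqVneq (sumn l) N; last first.
  apply: big1 => A; rewrite is_dpartE; have [->|//] := eqVneq (parts A) l.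
  by rewrite (negbTE sumn_l) andbF.
have parts_l : parts (set_of_parts N l) = l.
  by rewrite set_of_partsK //; apply/allP => x /mem_le_sumn; rewrite sumn_l.
rewrite (bigD1 (set_of_parts N l)) /=; last first.
  by rewrite is_dpartE parts_l /is_dseq sorted_l pos_l sumn_l eqxx.
rewrite parts_l eqxx big1 ?addr0 // => A /andP[_ ne_A].
by case: eqP => // parts_A; move: ne_A; rewrite -parts_A partsK eqxx.
Qed.

End FranklinOnSets.

Definition pent_term (l : seq nat) (r : nat) : int :=
  (-1) ^+ r * ((3 * r - 1)%:Z * (l == stair (2 * r - 1)%N r)%:Z
             + (3 * r)%:Z * (l == stair (2 * r)%N r)%:Z).

Lemma pent_term_eq0 l r : size l != r -> pent_term l r = 0.
Proof.
move=> size_l; have ne m : (l == stair m r) = false.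
  by apply: contraNF size_l => /eqP ->; rewrite size_stair.
by rewrite /pent_term !ne !mulr0.
Qed.

Lemma pent_term_size l : pent_term l (size l) = if pentagonal l then weight l else 0.
Proof.
rewrite /pent_term /pentagonal /weight.
have [n size_l] : {n | size l = n} by exists (size l).
rewrite size_l; case: n size_l => [/size0nil -> //|n size_l].
have neq : stair (2 * n.+1 - 1) n.+1 != stair (2 * n.+1) n.+1.
  by rewrite !stairS; apply/eqP => -[]; lia.
have [-> | _] := eqVneq l (stair (2 * n.+1 - 1) n.+1).
  rewrite (negbTE neq) stairS /= mulr1 mulr0 addr0.
  by congr (_ * Posz _); lia.
have [-> | _] := eqVneq l (stair (2 * n.+1) n.+1).
  rewrite stairS /= mulr1 mulr0 add0r.
  by congr (_ * Posz _); lia.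
by rewrite /= !mulr0.
Qed.

Lemma sum_pent_term l n : (size l < n)%N ->
  \sum_(1 <= r < n) pent_term l r = if pentagonal l then weight l else 0.
Proof.
(* 3 * 0 - 1 truncates to 0 *)
move=> lt_ln; have pent_term0 : pent_term l 0 = 0 by rewrite /pent_term !mul0r mulr0.
rewrite -pent_term_size -[LHS]add0r -pent_term0 -big_ltn; last lia.
rewrite (bigD1_seq (size l)) ?mem_index_iota ?iota_uniq //= big1_seq ?addr0 //.
by move=> r /andP[ne_r _]; rewrite pent_term_eq0 // eq_sym.
Qed.

Theorem mainTheorem2 : lhs_series = rhs_series.
Proof.
apply: functional_extensionality => N; rewrite /lhs_series /rhs_series.
rewrite (eq_bigr _ (fun A _ => weight_parts A)).
rewrite (bigID (fun A => pentagonal (parts A))) /= sum_weight_nonpentagonal addr0.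
rewrite big_mkcondr (eq_bigr (fun A => \sum_(1 <= r < N.+2) pent_term (parts A) r)).
  rewrite exchange_big; apply: eq_big_nat => r /andP[r_gt0 _].
  rewrite /pent_term -big_distrr big_split -!big_distrr /=.
  rewrite !sum_parts_eq ?is_dseq_stair //; try lia.
  by rewrite sumn_stair_pentagonal1 sumn_stair_pentagonal2.
move=> A; rewrite is_dpartE => /andP[/andP[_ pos_A] /eqP sumn_A].
by rewrite sum_pent_term //; have := size_le_sumn pos_A; lia.
Qed.
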